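(* Let $z_i\in\mathbb{C}$, $r_i\ge1$, and let $P_i$ be a polynomial of degree $s_i<r_i$, written $P_i(z)=\sum_{j=0}^{s_i}a_{i,r_i-j}(z-z_i)^j$ with $a_{i,r_i}\ne0$. Put $Q_i=P_i(z)/(z-z_i)^{r_i}$. Then for every $n\ge0$, $$Q_i^{(n)}(z)=\frac{(-1)^n(r_i)_n\,a_{i,r_i}}{(z-z_i)^{r_i+n}}\big(1+S_i^n(z)\big),$$ where $S_i^n$ is a polynomial and $S_i^n\to0$ uniformly on compact subsets of $\mathbb{C}$ as $n\to\infty$.
   Context: $(j)_n=j(j+1)\cdots(j+n-1)$ is the ascending Pochhammer symbol. *)

From Stdlib Require Import Reals List.
From Coquelicot Require Import Coquelicot.
Import Complex.
Open Scope C_scope.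

Fixpoint poch (j n : nat) : nat :=
  match n with
  | O => 1%nat
  | S m => (poch j m * (j + m))%nat
  end.

Definition Cpoly_eval (l : list C) (z : C) : C :=
  fold_right (fun c acc => c + z * acc) 0 l.

Definition is_Cpoly (f : C -> C) : Prop :=
  exists l : list C, forall z, f z = Cpoly_eval l z.

Fixpoint is_derive_n_on (U : C -> Prop) (n : nat) (f g : C -> C) : Prop :=
  match n with
  | O => forall z, U z -> f z = g z
  | S m => exists h : C -> C,
      (forall z, U z -> is_derive f z (h z)) /\ is_derive_n_on U m h g
  end.

Definition compactC (K : C -> Prop) : Prop :=
  forall (I : Type) (Uc : I -> C -> Prop),
    (forall i, open (Uc i)) ->
    (forall z, K z -> exists i, Uc i z) ->
    exists l : list I, forall z, K z -> exists i, In i l /\ Uc i z.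

Definition unif_cv0_on (K : C -> Prop) (S : nat -> C -> C) : Prop :=
  forall eps : R, (0 < eps)%R ->
    exists N : nat, forall n, (N <= n)%nat -> forall z, K z -> (Cmod (S n z) < eps)%R.

(* With w = z - z0, Q = sum_j a_(r-j) w^-(r-j) is a finite sum of negative powers of w,
   and the n-th derivative of w^-k is (-1)^n (k)_n w^-(k+n).  Factoring out the j = 0 term
   leaves S^n = sum_(1<=j<=s) a_(r-j) (r-j)_n / (a_r (r)_n) w^j.  Since (k)_n / (r)_n <= r/(n+1)
   for k < r, and |w| is bounded on a compact set, S^n = O(1/n) uniformly there. *)

From Stdlib Require Import Reals List Lia Lra.
From Coquelicot Require Import Coquelicot.
Import Complex.
Open Scope C_scope.

Lemma Cinv_0 : / RtoC 0 = RtoC 0.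
Proof. apply injective_projections; simpl; rewrite ?Rmult_0_l, ?Ropp_0, ?Rmult_0_l; lra. Qed.

Lemma is_derive_C_AbsRing (f : C -> C) (x l : C) :
  @is_derive C_AbsRing (AbsRing_NormedModule C_AbsRing) f x l <-> is_derive f x l.
Proof. split; intros [[H1 H2 H3] H]; repeat split; assumption. Qed.

Lemma is_derive_Cmult (f g : C -> C) (x df dg : C) :
  is_derive f x df -> is_derive g x dg ->
  is_derive (fun z => f z * g z) x (df * g x + f x * dg).
Proof.
  rewrite <- !is_derive_C_AbsRing. intros Hf Hg.
  apply (is_derive_mult (K := C_AbsRing)); [exact Hf | exact Hg | intros; apply Cmult_comm].
Qed.

Lemma is_derive_Cconst (c x : C) : is_derive (fun _ => c) x (RtoC 0).
Proof. exact (is_derive_const (K := C_AbsRing) (V := C_NormedModule) c x). Qed.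

Lemma is_derive_Csub_const (z0 x : C) : is_derive (fun z => z - z0) x (RtoC 1).
Proof.
  apply is_derive_C_AbsRing.
  replace (RtoC 1) with (@minus (AbsRing_NormedModule C_AbsRing) one zero)
    by (change (RtoC 1 - RtoC 0 = RtoC 1); ring).
  apply (is_derive_minus (K := C_AbsRing) (fun t => t) (fun _ => z0)).
  - apply is_derive_id.
  - apply is_derive_const.
Qed.

Lemma is_derive_Cinv (x : C) : x <> 0 -> is_derive Cinv x (- (/ x * / x)).
Proof.
  intros Hx. apply is_derive_C_AbsRing. split; [apply is_linear_scal_l|].
  intros x' Hx'.
  apply (@is_filter_lim_locally_unique _ (AbsRing_NormedModule C_AbsRing)) in Hx'. subst x'.
  (* The remainder is (y - x)^2 / (x^2 y), and |y| >= |x| / 2 near x. *)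
  intros eps.
  set (m := Cmod x). assert (Hm : 0 < m) by now apply Cmod_gt_0.
  pose proof (cond_pos eps) as Heps.
  assert (Hd : 0 < Rmin (m / 2) (eps * m ^ 3 / 2)).
  { apply Rmin_case; [lra|]. pose proof (pow_lt m 3 Hm). nra. }
  exists (mkposreal _ Hd). intros y Hy. change C in y.
  change (Cmod (y - x) < Rmin (m / 2) (eps * m ^ 3 / 2)) in Hy.
  change (Cmod ((/ y - / x) - (y - x) * - (/ x * / x)) <= eps * Cmod (y - x)).
  set (e := Cmod (y - x)) in *.
  assert (He : 0 <= e) by apply Cmod_ge_0.
  assert (Hex : e <= m / 2) by (pose proof (Rmin_l (m / 2) (eps * m ^ 3 / 2)); lra).
  assert (Hee : e <= eps * m ^ 3 / 2) by (pose proof (Rmin_r (m / 2) (eps * m ^ 3 / 2)); lra).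
  assert (Hmy : m / 2 <= Cmod y).
  { pose proof (Cmod_triangle y (- (y - x))) as H.
    rewrite Cmod_opp in H. replace (y + - (y - x)) with x in H by ring. fold m e in H. lra. }
  assert (Hy0 : y <> 0) by (intros ->; rewrite Cmod_0 in Hmy; lra).
  replace ((/ y - / x) - (y - x) * - (/ x * / x)) with ((y - x) * (y - x) * / (x * x * y))
    by (field; auto).
  rewrite !Cmod_mult, Cmod_inv, !Cmod_mult by (repeat apply Cmult_neq_0; auto).
  fold m e. set (q := Cmod y) in *.
  assert (Hq : 0 < m * m * q) by (apply Rmult_lt_0_compat; [nra | lra]).
  apply Rmult_le_reg_r with (m * m * q)%R; [exact Hq|].
  rewrite Rmult_assoc, Rinv_l, Rmult_1_r by lra.
  assert (H1 : e * e <= e * (eps * m ^ 3 / 2)) by (apply Rmult_le_compat_l; assumption).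
  assert (H2 : 0 <= eps * e * (m * m)) by (apply Rmult_le_pos; nra).
  pose proof (Rmult_le_compat_l _ _ _ H2 Hmy) as H3.
  simpl in *. nra.
Qed.

Lemma is_derive_inv_sub (z0 x : C) :
  x <> z0 -> is_derive (fun z => / (z - z0)) x (- (/ (x - z0)) ^ 2).
Proof.
  intros Hx.
  assert (Hw : x - z0 <> 0) by now apply Cminus_eq_contra.
  replace (- (/ (x - z0)) ^ 2) with (scal (RtoC 1) (- (/ (x - z0) * / (x - z0))))
    by (change (RtoC 1 * - (/ (x - z0) * / (x - z0)) = - (/ (x - z0)) ^ 2); simpl; ring).
  apply (is_derive_comp (K := C_AbsRing) (V := C_NormedModule) Cinv (fun z => z - z0)).
  - now apply is_derive_Cinv.
  - apply is_derive_C_AbsRing, is_derive_Csub_const.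
Qed.

Lemma is_derive_inv_sub_pow (z0 x : C) (k : nat) : x <> z0 ->
  is_derive (fun z => (/ (z - z0)) ^ k) x (- INR k * (/ (x - z0)) ^ S k).
Proof.
  intros Hx. induction k as [|k IH].
  - replace (- INR 0 * (/ (x - z0)) ^ 1) with (RtoC 0) by (simpl; ring).
    exact (is_derive_Cconst (RtoC 1) x).
  - replace (- INR (S k) * (/ (x - z0)) ^ S (S k))
      with (- (/ (x - z0)) ^ 2 * (/ (x - z0)) ^ k + / (x - z0) * (- INR k * (/ (x - z0)) ^ S k))
      by (rewrite S_INR, RtoC_plus; simpl; ring).
    apply (is_derive_Cmult (fun z => / (z - z0)) (fun z => (/ (z - z0)) ^ k)); [|exact IH].
    now apply is_derive_inv_sub.
Qed.

Lemma is_derive_n_on_ext (U : C -> Prop) (n : nat) (f f' g : C -> C) :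
  (forall z, f z = f' z) -> is_derive_n_on U n f' g -> is_derive_n_on U n f g.
Proof.
  intros E. destruct n as [|n]; simpl.
  - intros H z Hz. rewrite E. auto.
  - intros [h [Hh Hn]]. exists h. split; [|exact Hn].
    intros z Hz. apply (is_derive_ext f'); [intros t; now rewrite E | auto].
Qed.

Lemma is_derive_n_on_iter (U : C -> Prop) (G : nat -> C -> C) :
  (forall m z, U z -> is_derive (G m) z (G (S m) z)) ->
  forall n g, (forall z, U z -> G n z = g z) -> is_derive_n_on U n (G O) g.
Proof.
  intros HG n. revert G HG. induction n as [|n IH]; intros G HG g Hg; simpl.
  - intros z Hz. auto.
  - exists (G 1%nat). split; [auto|].
    apply (IH (fun m => G (S m))); auto.
Qed.

(* Also true at w = 0 since / 0 = 0, so that [Q_deriv_0] below holds on all of C. *)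
Lemma Cpow_div_Cpow_lt (w : C) (j r : nat) : (j < r)%nat -> w ^ j / w ^ r = (/ w) ^ (r - j).
Proof.
  intros Hjr. destruct (r - j)%nat as [|k] eqn:Hk; [lia|].
  replace r with (S k + j)%nat by lia. rewrite Cpow_add_r.
  destruct (Ceq_dec w 0) as [->|Hw].
  - simpl. unfold Cdiv. rewrite !Cmult_0_l, Cinv_0. ring.
  - rewrite Cpow_inv by exact Hw. field. split; apply Cpow_nz; exact Hw.
Qed.

Lemma poch_pos (k n : nat) : (1 <= k)%nat -> (0 < poch k n)%nat.
Proof. intros Hk. induction n as [|n IH]; simpl; nia. Qed.

Lemma poch_le_l (k k' n : nat) : (k <= k')%nat -> (poch k n <= poch k' n)%nat.
Proof. intros H. induction n as [|n IH]; simpl; [lia | nia]. Qed.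

Lemma poch_mul_shift (k n : nat) : (poch k n * (k + n) = k * poch (S k) n)%nat.
Proof. induction n as [|n IH]; simpl; nia. Qed.

Lemma poch_mul_succ_le (k r n : nat) : (k < r)%nat -> (poch k n * S n <= r * poch r n)%nat.
Proof.
  intros Hkr.
  pose proof (poch_mul_shift k n).
  pose proof (poch_le_l k r n ltac:(lia)).
  pose proof (poch_le_l (S k) r n Hkr).
  (* (k)_n (n + 1) <= (k)_n (k + n) + (k)_n = k (k + 1)_n + (k)_n <= (k + 1) (r)_n *)
  nia.
Qed.

Lemma poch_ratio_le (k r n : nat) :
  (k < r)%nat -> (INR (poch k n) / INR (poch r n) <= INR r / INR (S n))%R.
Proof.
  intros Hkr.
  assert (Hp : (0 < INR (poch r n))%R) by (apply lt_0_INR, poch_pos; lia).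
  assert (Hn : (0 < INR (S n))%R) by apply lt_0_INR, Nat.lt_0_succ.
  apply (Rmult_le_reg_r (INR (poch r n) * INR (S n))); [nra|].
  replace (INR (poch k n) / INR (poch r n) * (INR (poch r n) * INR (S n)))%R
    with (INR (poch k n * S n)) by (rewrite mult_INR; field; lra).
  replace (INR r / INR (S n) * (INR (poch r n) * INR (S n)))%R
    with (INR (r * poch r n)) by (rewrite mult_INR; field; lra).
  apply le_INR, poch_mul_succ_le, Hkr.
Qed.

Definition S_coef (a : nat -> C) (r n j : nat) : C :=
  INR (poch (r - j) n) * a (r - j)%nat / (INR (poch r n) * a r).

Definition S_poly (a : nat -> C) (r s : nat) (z0 : C) (n : nat) (z : C) : C :=
  sum_n_m (fun j => S_coef a r n j * (z - z0) ^ j) 1 s.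

Lemma RtoC_INR_poch_neq0 (r n : nat) : (1 <= r)%nat -> RtoC (INR (poch r n)) <> 0.
Proof.
  intros Hr E. apply (f_equal fst) in E. simpl in E.
  apply (not_0_INR (poch r n)); [|exact E]. apply Nat.neq_0_lt_0, poch_pos, Hr.
Qed.

Lemma S_coef_0 (a : nat -> C) (r n : nat) : (1 <= r)%nat -> a r <> 0 -> S_coef a r n 0 = 1.
Proof.
  intros Hr Ha. unfold S_coef. rewrite Nat.sub_0_r.
  field. split; [exact Ha | now apply RtoC_INR_poch_neq0].
Qed.

Lemma Cmod_S_coef_le (a : nat -> C) (r n j : nat) : (1 <= j)%nat -> (1 <= r)%nat -> a r <> 0 ->
  (Cmod (S_coef a r n j) <= Cmod (a (r - j)%nat) / Cmod (a r) * (INR r / INR (S n)))%R.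
Proof.
  intros Hj Hr Ha. unfold S_coef, Cdiv.
  assert (Har : (0 < Cmod (a r))%R) by now apply Cmod_gt_0.
  rewrite !Cmod_mult, Cmod_inv, Cmod_mult, !Cmod_R, !Rabs_pos_eq by
    (apply pos_INR || (apply Cmult_neq_0; [now apply RtoC_INR_poch_neq0 | exact Ha])).
  pose proof (poch_ratio_le (r - j) r n ltac:(lia)) as H.
  assert (Hp : (0 < INR (poch r n))%R) by (apply lt_0_INR, poch_pos; lia).
  replace (INR (poch (r - j) n) * Cmod (a (r - j)%nat) * / (INR (poch r n) * Cmod (a r)))%R
    with (Cmod (a (r - j)%nat) / Cmod (a r) * (INR (poch (r - j) n) / INR (poch r n)))%R
    by (field; lra).
  apply Rmult_le_compat_l; [|exact H].
  apply Rdiv_le_0_compat; [apply Cmod_ge_0 | exact Har].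
Qed.

Definition Q_deriv (a : nat -> C) (r s : nat) (z0 : C) (n : nat) (z : C) : C :=
  sum_n (fun j => (-1) ^ n * INR (poch (r - j) n) * a (r - j)%nat * (/ (z - z0)) ^ (r - j + n)) s.

Lemma is_derive_Q_deriv (a : nat -> C) (r s : nat) (z0 : C) (n : nat) (z : C) :
  z <> z0 -> is_derive (Q_deriv a r s z0 n) z (Q_deriv a r s z0 (S n) z).
Proof.
  intros Hz.
  apply (is_derive_sum_n (K := C_AbsRing) (V := C_NormedModule)). intros j _.
  set (c := (-1) ^ n * INR (poch (r - j) n) * a (r - j)%nat).
  replace ((-1) ^ S n * INR (poch (r - j) (S n)) * a (r - j)%nat * (/ (z - z0)) ^ (r - j + S n))
    with (0 * (/ (z - z0)) ^ (r - j + n) + c * (- INR (r - j + n) * (/ (z - z0)) ^ S (r - j + n)))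
    by (unfold c; rewrite Nat.add_succ_r; simpl poch; rewrite mult_INR, RtoC_mult; simpl; ring).
  apply (is_derive_Cmult (fun _ => c)); [apply is_derive_Cconst | now apply is_derive_inv_sub_pow].
Qed.

Lemma Q_deriv_0 (a : nat -> C) (r s : nat) (z0 z : C) : (s < r)%nat ->
  sum_n (fun j => a (r - j)%nat * (z - z0) ^ j) s / (z - z0) ^ r = Q_deriv a r s z0 0 z.
Proof.
  intros Hsr. unfold Q_deriv, Cdiv.
  rewrite <- (sum_n_mult_r (K := C_Ring)).
  apply sum_n_ext_loc. intros j Hj. change (a (r - j)%nat * (z - z0) ^ j * / (z - z0) ^ r =
    (-1) ^ 0 * INR (poch (r - j) 0) * a (r - j)%nat * (/ (z - z0)) ^ (r - j + 0)).
  rewrite Nat.add_0_r, <- Cpow_div_Cpow_lt by lia. unfold Cdiv. simpl. ring.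
Qed.

Lemma Q_deriv_factor (a : nat -> C) (r s : nat) (z0 : C) (n : nat) (z : C) :
  (1 <= r)%nat -> (s < r)%nat -> a r <> 0 -> z <> z0 ->
  Q_deriv a r s z0 n z
  = (-1) ^ n * RtoC (INR (poch r n)) * a r / (z - z0) ^ (r + n) * (1 + S_poly a r s z0 n z).
Proof.
  intros Hr Hsr Ha Hz.
  assert (Hw : z - z0 <> 0) by now apply Cminus_eq_contra.
  assert (Hp := RtoC_INR_poch_neq0 r n Hr).
  set (P := (-1) ^ n * RtoC (INR (poch r n)) * a r / (z - z0) ^ (r + n)).
  assert (Hterm : forall j, (j <= r)%nat ->
    (-1) ^ n * INR (poch (r - j) n) * a (r - j)%nat * (/ (z - z0)) ^ (r - j + n)
    = P * (S_coef a r n j * (z - z0) ^ j)).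
  { intros j Hj. unfold P, S_coef.
    replace (r + n)%nat with (r - j + n + j)%nat by lia.
    rewrite Cpow_inv, (Cpow_add_r _ (r - j + n)) by exact Hw.
    field. repeat split; auto; apply Cpow_nz, Hw. }
  unfold Q_deriv, S_poly, sum_n.
  rewrite (sum_n_m_ext_loc _ (fun j => mult P (S_coef a r n j * (z - z0) ^ j)))
    by (intros j Hj; apply Hterm; lia).
  rewrite sum_n_m_mult_l, (sum_Sn_m _ 0 s), S_coef_0 by (auto; lia).
  change (P * (1 * (z - z0) ^ 0 + sum_n_m (fun j => S_coef a r n j * (z - z0) ^ j) 1 s)
    = P * (1 + sum_n_m (fun j => S_coef a r n j * (z - z0) ^ j) 1 s)).
  simpl. ring.
Qed.

Fixpoint Cpoly_add (l m : list C) : list C :=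
  match l, m with
  | nil, _ => m
  | _, nil => l
  | x :: l', y :: m' => (x + y) :: Cpoly_add l' m'
  end.

Fixpoint Cpoly_mul (l m : list C) : list C :=
  match l with
  | nil => nil
  | x :: l' => Cpoly_add (map (Cmult x) m) (RtoC 0 :: Cpoly_mul l' m)
  end.

Lemma Cpoly_eval_add (l m : list C) (z : C) :
  Cpoly_eval (Cpoly_add l m) z = Cpoly_eval l z + Cpoly_eval m z.
Proof.
  revert m; induction l as [|x l IH]; intros [|y m]; simpl; try ring.
  rewrite IH. ring.
Qed.

Lemma Cpoly_eval_scale (x : C) (m : list C) (z : C) :
  Cpoly_eval (map (Cmult x) m) z = x * Cpoly_eval m z.
Proof. induction m as [|y m IH]; simpl; [ring|]. rewrite IH. ring. Qed.

Lemma Cpoly_eval_mul (l m : list C) (z : C) :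
  Cpoly_eval (Cpoly_mul l m) z = Cpoly_eval l z * Cpoly_eval m z.
Proof.
  induction l as [|x l IH]; simpl; [ring|].
  rewrite Cpoly_eval_add, Cpoly_eval_scale. simpl. rewrite IH. ring.
Qed.

Lemma is_Cpoly_const (c : C) : is_Cpoly (fun _ => c).
Proof. exists (c :: nil). intros z. simpl. ring. Qed.

Lemma is_Cpoly_id : is_Cpoly (fun z => z).
Proof. exists (RtoC 0 :: RtoC 1 :: nil). intros z. simpl. ring. Qed.

Lemma is_Cpoly_plus (f g : C -> C) : is_Cpoly f -> is_Cpoly g -> is_Cpoly (fun z => f z + g z).
Proof.
  intros [l Hl] [m Hm]. exists (Cpoly_add l m). intros z. now rewrite Cpoly_eval_add, Hl, Hm.
Qed.

Lemma is_Cpoly_mult (f g : C -> C) : is_Cpoly f -> is_Cpoly g -> is_Cpoly (fun z => f z * g z).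
Proof.
  intros [l Hl] [m Hm]. exists (Cpoly_mul l m). intros z. now rewrite Cpoly_eval_mul, Hl, Hm.
Qed.

Lemma is_Cpoly_pow (f : C -> C) (k : nat) : is_Cpoly f -> is_Cpoly (fun z => f z ^ k).
Proof.
  intros Hf. induction k as [|k IH]; simpl.
  - apply is_Cpoly_const.
  - exact (is_Cpoly_mult f _ Hf IH).
Qed.

Lemma is_Cpoly_sum_n_m (g : nat -> C -> C) (n m : nat) :
  (forall j, is_Cpoly (g j)) -> is_Cpoly (fun z => sum_n_m (fun j => g j z) n m).
Proof.
  intros Hg. induction m as [|m IH].
  - destruct n as [|n].
    + destruct (Hg O) as [l Hl]. exists l. intros z. rewrite sum_n_n. apply Hl.
    + exists nil. intros z. now rewrite sum_n_m_zero by lia.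
  - destruct (Nat.le_gt_cases n (S m)) as [Hn|Hn].
    + destruct (is_Cpoly_plus _ _ IH (Hg (S m))) as [l Hl].
      exists l. intros z. rewrite sum_n_Sm by exact Hn. apply Hl.
    + exists nil. intros z. now rewrite sum_n_m_zero by lia.
Qed.

Lemma is_Cpoly_S_poly (a : nat -> C) (r s : nat) (z0 : C) (n : nat) : is_Cpoly (S_poly a r s z0 n).
Proof.
  apply (is_Cpoly_sum_n_m (fun j z => S_coef a r n j * (z - z0) ^ j)). intros j.
  apply is_Cpoly_mult; [apply is_Cpoly_const|].
  apply (is_Cpoly_pow (fun z => z - z0)), is_Cpoly_plus; [apply is_Cpoly_id | apply is_Cpoly_const].
Qed.

Lemma sum_n_m_le_loc (a b : nat -> R) (n m : nat) :
  (forall k, (n <= k <= m)%nat -> (a k <= b k)%R) -> (sum_n_m a n m <= sum_n_m b n m)%R.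
Proof.
  intros Hab.
  rewrite (sum_n_m_ext_loc a (fun k => Rmin (a k) (b k)))
    by (intros k Hk; symmetry; apply Rmin_left, Hab, Hk).
  apply sum_n_m_le. intros k. apply Rmin_r.
Qed.

Lemma Cmod_S_poly_le (a : nat -> C) (r s : nat) (z0 : C) (M : R) (n : nat) (z : C) :
  (1 <= r)%nat -> a r <> 0 -> (Cmod (z - z0) <= M)%R ->
  (Cmod (S_poly a r s z0 n z)
   <= sum_n_m (fun j => Cmod (a (r - j)%nat) / Cmod (a r) * INR r * M ^ j) 1 s / INR (S n))%R.
Proof.
  intros Hr Ha HzM.
  assert (Hn : (0 < INR (S n))%R) by apply lt_0_INR, Nat.lt_0_succ.
  assert (Har : (0 < Cmod (a r))%R) by now apply Cmod_gt_0.
  unfold S_poly, Rdiv. rewrite <- (sum_n_m_mult_r (K := R_Ring)).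
  eapply Rle_trans; [apply (norm_sum_n_m (V := C_NormedModule))|].
  apply sum_n_m_le_loc. intros j Hj. change (Cmod (S_coef a r n j * (z - z0) ^ j)
    <= Cmod (a (r - j)%nat) / Cmod (a r) * INR r * M ^ j * / INR (S n))%R.
  rewrite Cmod_mult, Cmod_pow.
  pose proof (Cmod_S_coef_le a r n j ltac:(lia) Hr Ha) as Hc.
  assert (Hw : (Cmod (z - z0) ^ j <= M ^ j)%R) by (apply pow_incr; split; [apply Cmod_ge_0 | exact HzM]).
  replace (Cmod (a (r - j)%nat) / Cmod (a r) * INR r * M ^ j * / INR (S n))%R
    with (Cmod (a (r - j)%nat) / Cmod (a r) * (INR r / INR (S n)) * M ^ j)%R by (field; lra).
  apply Rmult_le_compat; [apply Cmod_ge_0 | apply pow_le, Cmod_ge_0 | exact Hc | exact Hw].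
Qed.

Lemma unif_cv0_on_of_le_div_succ (K : C -> Prop) (u : nat -> C -> C) (B : R) :
  (forall n z, K z -> (Cmod (u n z) <= B / INR (S n))%R) -> unif_cv0_on K u.
Proof.
  intros HB eps Heps.
  destruct (INR_unbounded (B / eps)) as [N HN].
  exists N. intros n Hn z Hz.
  assert (HNn : (INR N <= INR n)%R) by now apply le_INR.
  assert (HSn : (B / eps < INR (S n))%R) by (rewrite S_INR; lra).
  apply (Rmult_lt_compat_l eps) in HSn; [|exact Heps].
  replace (eps * (B / eps))%R with B in HSn by (field; lra).
  eapply Rle_lt_trans; [exact (HB n z Hz)|].
  apply Rmult_lt_reg_r with (INR (S n)); [apply lt_0_INR, Nat.lt_0_succ|].
  unfold Rdiv. rewrite Rmult_assoc, Rinv_l by (apply not_0_INR, Nat.neq_succ_0).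
  lra.
Qed.

Lemma compactC_bounded (K : C -> Prop) (z0 : C) :
  compactC K -> exists M : R, forall z, K z -> (Cmod (z - z0) <= M)%R.
Proof.
  intros HK.
  destruct (HK nat (fun i z => Cmod (z - z0) < INR i)%R) as [l Hl].
  - intros i z Hz. apply (@locally_le_locally_norm C_AbsRing C_NormedModule z).
    assert (He : (0 < INR i - Cmod (z - z0))%R) by lra.
    exists (mkposreal _ He). intros y Hy. change (Cmod (y - z) < INR i - Cmod (z - z0))%R in Hy.
    pose proof (Cmod_triangle (y - z) (z - z0)) as H.
    replace (y - z + (z - z0)) with (y - z0) in H by ring. lra.
  - intros z _. destruct (INR_unbounded (Cmod (z - z0))) as [i Hi]. exists i. exact Hi.
  - exists (INR (list_max l)). intros z Hz.
    destruct (Hl z Hz) as [i [Hi Hzi]].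
    assert (Hmax : (i <= list_max l)%nat)
      by (apply (proj1 (Forall_forall _ l) (proj1 (list_max_le l _) (le_n _))), Hi).
    apply le_INR in Hmax. lra.
Qed.

Theorem lemma4p1 (z0 : C) (r s : nat) (a : nat -> C) :
  (1 <= r)%nat -> (s < r)%nat ->
  a (r - s)%nat <> 0 -> (* P has degree exactly s *)
  a r <> 0 ->
  exists S : nat -> C -> C,
    (forall n, is_Cpoly (S n)) /\
    (forall n : nat,
       is_derive_n_on (fun z => z <> z0) n
         (fun z => sum_n (fun j => a (r - j)%nat * (z - z0) ^ j) s / (z - z0) ^ r)
         (fun z => (-1) ^ n * RtoC (INR (poch r n)) * a r / (z - z0) ^ (r + n)
                   * (1 + S n z))) /\
    (forall K : C -> Prop, compactC K -> unif_cv0_on K S).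
Proof.
  intros Hr Hsr _ Ha.
  exists (S_poly a r s z0). split; [|split].
  - apply is_Cpoly_S_poly.
  - intros n. apply (is_derive_n_on_ext _ _ _ (Q_deriv a r s z0 0)).
    + intros z. now apply Q_deriv_0.
    + apply is_derive_n_on_iter.
      * intros m z Hz. now apply is_derive_Q_deriv.
      * intros z Hz. now apply Q_deriv_factor.
  - intros K HK. destruct (compactC_bounded K z0 HK) as [M HM].
    apply (unif_cv0_on_of_le_div_succ _ _
      (sum_n_m (fun j => Cmod (a (r - j)%nat) / Cmod (a r) * INR r * M ^ j) 1 s)%R).
    intros n z Hz. apply Cmod_S_poly_le; auto.
Qed.
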